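(* Let $(M,g,S)$, $p$, $u$, $\varphi$, $\beta_2$ and $e_1,e_2$ be as in the context. Give each $v\in\beta_2$ coordinates $(x,y)$ by $v=xe_1+ye_2$. For $a\in\mathbb R$, the circle $k_2=\{v\in\beta_2:\tilde g(v,v)=a\}$ has the equation $$\frac{2\cos\varphi+1}{1+\cos\varphi}\,x^2+\frac{2\cos\varphi-1}{1-\cos\varphi}\,y^2=a.$$
   Context: $M$ is a 4-dimensional differentiable manifold with a positive definite metric $g$ and a tensor field $S$ of type $(1,1)$ whose components in some local coordinate system form the matrix with rows $(0,1,0,0)$, $(0,0,1,0)$, $(0,0,0,1)$, $(-1,0,0,0)$; hence $S^4=-\mathrm{id}$, and $g(Su,Sv)=g(u,v)$ for all vector fields $u,v$. The associated metric is $\tilde g(u,v)=g(u,Sv)+g(Su,v)$. Here $p\in M$, $u\in T_pM$ is a $g$-unit vector such that $\{u,Su,S^2u,S^3u\}$ is a basis of $T_pM$, $\varphi=\angle(u,Su)$ with respect to $g$ (so $\cos\varphi=g(u,Su)$; known: $\frac{\pi}{4}<\varphi<\frac{3\pi}{4}$), $\beta_2=\mathrm{span}\{u,Su\}$, and $e_1=\frac{1}{\sqrt{2(1+\cos\varphi)}}(u+Su)$, $e_2=\frac{1}{\sqrt{2(1-\cos\varphi)}}(-u+Su)$ (a $g$-orthonormal basis of $\beta_2$). *)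

From HB Require Import structures.
From mathcomp Require Import all_boot all_order all_algebra.
From mathcomp Require Import all_classical all_reals all_analysis.
Set Implicit Arguments. Unset Strict Implicit. Unset Printing Implicit Defensive.
Import Order.TTheory GRing.Theory Num.Theory.
Local Open Scope ring_scope.

(* The structure S at p, in the local coordinates: the matrix with rows
   (0,1,0,0), (0,0,1,0), (0,0,0,1), (-1,0,0,0); it acts on column vectors
   of components: (S v)^i = S^i_j v^j. *)
Definition Smat (R : ringType) : 'M[R]_4 :=
  \matrix_(i < 4, j < 4)
    (if (j : nat) == (i : nat).+1 then 1
     else if ((i : nat) == 3%N) && ((j : nat) == 0%N) then -1 else 0).

Definition gform (R : ringType) (G : 'M[R]_4) (v w : 'cV[R]_4) : R :=
  (v^T *m G *m w) 0 0.

Definition gtilde (R : ringType) (G : 'M[R]_4) (v w : 'cV[R]_4) : R :=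
  gform G v (Smat R *m w) + gform G (Smat R *m v) w.

Definition is_basis4 (R : ringType) (v0 v1 v2 v3 : 'cV[R]_4) : Prop :=
  forall a b c d : R, a *: v0 + b *: v1 + c *: v2 + d *: v3 = 0 ->
    [/\ a = 0, b = 0, c = 0 & d = 0].

(* On the plane spanned by u and S u the form g~(v,v) = 2 g(v, S v) is read off
   from three inner products: g(u,u) = g(Su,Su) = 1, g(u,Su) = g(Su,S^2 u) = cos phi
   and g(u, S^2 u) = 0, the latter because the isometry S^2 squares to -id, which
   makes g(v, S^2 v) skew.  Hence g~(a u + b Su) = 2 (a^2 + b^2) cos phi + 2 a b,
   and substituting a = x s1 - y s2, b = x s1 + y s2, with s1^2 = 1/(2(1+cos phi))
   and s2^2 = 1/(2(1-cos phi)) the normalising factors of e1 and e2, gives the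
   equation of the circle. *)
From HB Require Import structures.
From mathcomp Require Import all_boot all_order all_algebra.
From mathcomp Require Import all_classical all_reals all_analysis.
From mathcomp Require Import ring lra.
Set Implicit Arguments. Unset Strict Implicit. Unset Printing Implicit Defensive.
Import Order.TTheory GRing.Theory Num.Theory.
Local Open Scope ring_scope.

Section Bilinear.
Variables (R : comNzRingType) (G : 'M[R]_4).

Lemma gformDl (v1 v2 w : 'cV[R]_4) : gform G (v1 + v2) w = gform G v1 w + gform G v2 w.
Proof. by rewrite /gform linearD /= !mulmxDl mxE. Qed.

Lemma gformDr (v w1 w2 : 'cV[R]_4) : gform G v (w1 + w2) = gform G v w1 + gform G v w2.
Proof. by rewrite /gform !mulmxDr mxE. Qed.

Lemma gformZl (k : R) (v w : 'cV[R]_4) : gform G (k *: v) w = k * gform G v w.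
Proof. by rewrite /gform linearZ /= -!scalemxAl mxE. Qed.

Lemma gformZr (k : R) (v w : 'cV[R]_4) : gform G v (k *: w) = k * gform G v w.
Proof. by rewrite /gform -!scalemxAr mxE. Qed.

Lemma gformNl (v w : 'cV[R]_4) : gform G (- v) w = - gform G v w.
Proof. by rewrite -scaleN1r gformZl mulN1r. Qed.

Lemma gformC : G^T = G -> forall v w : 'cV[R]_4, gform G v w = gform G w v.
Proof.
move=> Gsym v w; rewrite /gform; transitivity ((v^T *m G *m w)^T 0 0).
  by rewrite [RHS]mxE.
by rewrite !trmx_mul trmxK Gsym mulmxA.
Qed.

End Bilinear.

Lemma Smat_exp4 (R : nzRingType) (v : 'cV[R]_4) :
  Smat R *m (Smat R *m (Smat R *m (Smat R *m v))) = - v.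
Proof.
apply/matrixP => i j; rewrite !mxE.
do 4!rewrite !big_ord_recl !big_ord0 !mxE /=.
have -> : j = 0 by apply/val_inj; case: j => [[]].
case: i => [[|[|[|[|i]]]] Hi] //=; rewrite ?(mul0r, mul1r, mulN1r, add0r, addr0);
  by congr (- v _ _); apply/val_inj.
Qed.

Section SInvariantForm.
Variables (R : numFieldType) (G : 'M[R]_4).
Hypothesis Gsym : G^T = G.
Hypothesis S_isometry :
  forall v w : 'cV[R]_4, gform G (Smat R *m v) (Smat R *m w) = gform G v w.

Local Notation S := (Smat R).

Lemma gform_S2_orthogonal (v : 'cV[R]_4) : gform G v (S *m (S *m v)) = 0.
Proof.
set t := gform G v _.
have skew : t = - t.
  rewrite /t -[LHS]S_isometry -[LHS]S_isometry Smat_exp4.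
  by rewrite (gformC Gsym) gformNl.
have /eqP : t *+ 2 = 0 by rewrite mulr2n {1}skew addNr.
by rewrite -mulr_natr mulf_eq0 pnatr_eq0 orbF => /eqP.
Qed.

Lemma gtilde_diag (v : 'cV[R]_4) : gtilde G v v = 2 * gform G v (S *m v).
Proof. by rewrite /gtilde (gformC Gsym (S *m v)) mulr2n mulrDl mul1r. Qed.

Lemma gtilde_span_u_Su (u : 'cV[R]_4) (a b : R) :
  gform G u u = 1 ->
  let v := a *: u + b *: (S *m u) in
  gtilde G v v = 2 * ((a ^+ 2 + b ^+ 2) * gform G u (S *m u) + a * b).
Proof.
move=> u_unit v; rewrite gtilde_diag /v mulmxDr -!scalemxAr.
rewrite !(gformDl, gformDr, gformZl, gformZr).
rewrite gform_S2_orthogonal !S_isometry u_unit.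
by ring.
Qed.

End SInvariantForm.

Theorem theorem5p6 (R : realType) (G : 'M[R]_4) (u : 'cV[R]_4) (phi : R)
  (HGsym : G^T = G)
  (HGpos : forall v : 'cV[R]_4, v != 0 -> 0 < gform G v v)
  (HSiso : forall v w : 'cV[R]_4,
      gform G (Smat R *m v) (Smat R *m w) = gform G v w)
  (Hunit : gform G u u = 1)
  (Hbasis : is_basis4 u (Smat R *m u) (Smat R ^+ 2 *m u) (Smat R ^+ 3 *m u))
  (Hphi : pi / 4 < phi < 3 * pi / 4)
  (Hcos : cos phi = gform G u (Smat R *m u)) :
  let c := cos phi in
  let e1 := (Num.sqrt (2 * (1 + c)))^-1 *: (u + Smat R *m u) in
  let e2 := (Num.sqrt (2 * (1 - c)))^-1 *: (- u + Smat R *m u) in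
  forall a x y : R,
    gtilde G (x *: e1 + y *: e2) (x *: e1 + y *: e2) = a <->
    (2 * c + 1) / (1 + c) * x ^+ 2 + (2 * c - 1) / (1 - c) * y ^+ 2 = a.
Proof.
move=> c e1 e2 a x y.
set s1 := (Num.sqrt (2 * (1 + c)))^-1.
set s2 := (Num.sqrt (2 * (1 - c)))^-1.
have /andP[c_geN1 c_le1] : -1 <= c <= 1 by rewrite cos_geN1 cos_le1.
have s1_sq : 2 * s1 ^+ 2 = (1 + c)^-1.
  by rewrite exprVn sqr_sqrtr ?invfM ?mulVKf ?pnatr_eq0 //; lra.
have s2_sq : 2 * s2 ^+ 2 = (1 - c)^-1.
  by rewrite exprVn sqr_sqrtr ?invfM ?mulVKf ?pnatr_eq0 //; lra.
have -> : x *: e1 + y *: e2 =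
    (x * s1 - y * s2) *: u + (x * s1 + y * s2) *: (Smat R *m u).
  by rewrite /e1 /e2 -/s1 -/s2 !scalerDr !scalerN !scalerA scalerBl scalerDl addrACA.
rewrite gtilde_span_u_Su // -Hcos -/c -s1_sq -s2_sq.
by split=> <-; ring.
Qed.
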